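(* Let $\mathcal{A}$ be a unital $*$-algebra (a unital $*$-subalgebra of $\mathcal{B}(\mathbf{h})$ for a Hilbert space $\mathbf{h}$), let $\mathcal{L}:\mathcal{A}\to\mathcal{A}$ be a conditionally completely positive map with $\mathcal{L}(1)=0$, and let $(M,\pi,\delta)$ be its canonical pre-Hilbert $\mathcal{A}$-$\mathcal{A}$ bimodule, left-action $*$-representation $\pi:\mathcal{A}\to\mathcal{B}^a(M)$ and bimodule derivation $\delta:\mathcal{A}\to M$, as described in the context. Let $E_{\mathcal{L}}=\mathcal{B}^a(\mathcal{A}\oplus M)$ with the $\mathcal{A}$-$\mathcal{A}$ bimodule structure $x.R=\tilde\pi(x)R$, $R.x=R\tilde\pi(x)$, where $\tilde\pi(x)=x\oplus\pi(x)$. If the second Hochschild cohomology $H^2(\mathcal{A},E_{\mathcal{L}})$ vanishes, then there exists a $*$-homomorphism $\beta:\mathcal{A}\to E_{\mathcal{L}}[[t]]$ which, writing $h=t^2$ (so $h^{\frac{2n-1}{2}}=t^{2n-1}$) and $$\beta(x)=\begin{pmatrix}\beta_{00}(h)(x) & \beta_{01}(h)(x)\\ \beta_{10}(h)(x) & \beta_{11}(h)(x)\end{pmatrix}$$ in the matrix decomposition of $E_{\mathcal{L}}$, has the form - $\beta_{00}(h)=\sum_{n\ge 0}h^n\theta_{00}^{(n)}$ with $\theta_{00}^{(0)}(x)=x$ and $\theta_{00}^{(1)}(x)=\mathcal{L}(x)$, - $\beta_{10}(h)=\sum_{n\ge 1}h^{\frac{2n-1}{2}}\theta_{10}^{(n)}$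 with $\theta_{10}^{(1)}(x)=\delta(x)$, - $\beta_{01}(h)=\sum_{n\ge 1}h^{\frac{2n-1}{2}}\theta_{01}^{(n)}$ with $\theta_{01}^{(1)}(x)=\delta^\dagger(x)$, - $\beta_{11}(h)=\sum_{n\ge 1}h^{n-1}\theta_{11}^{(n)}$ with $\theta_{11}^{(1)}(x)=\pi(x)$, for some linear maps $\theta_{\mu\nu}^{(n)}$ on $\mathcal{A}$.
   Context: A linear map $\mathcal{L}$ on $\mathcal{A}$ with $\mathcal{L}(1)=0$ that is conditionally completely positive admits a canonical (unique up to isomorphism) pre-Hilbert $\mathcal{A}$-$\mathcal{A}$ bimodule $M$ with $\mathcal{A}$-valued inner product $\langle\cdot,\cdot\rangle$, whose left action is given by a $*$-representation $\pi$ of $\mathcal{A}$ into the algebra $\mathcal{B}^a(M)$ of adjointable maps on $M$, together with a bimodule derivation $\delta:\mathcal{A}\to M$ (i.e. $\delta(xy)=\pi(x)\delta(y)+\delta(x)y$) such that $M$ is the right $\mathcal{A}$-linear span of $\delta(\mathcal{A})$ and $\mathcal{L}(xy)-x\mathcal{L}(y)-\mathcal{L}(x)y=\delta^\dagger(x)\delta(y)$ for all $x,y\in\mathcal{A}$. Here for a linear map $\psi$, $\psi^\dagger(x):=(\psi(x^* ))^*$, and an element $\xi\in M$ is identified with the adjoint map $\xi^*=\langle\xi|:M\to\mathcal{A}$, $\eta\mapsto\langle\xi,\eta\rangle$; $M^*=\{\xi^*:\xi\in M\}$. The $*$-algebra $E_{\mathcal{L}}=\mathcal{B}^a(\mathcal{A}\oplus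 M)$ (product = composition, $*$ = adjoint) is the direct sum of the complemented submodules $\mathcal{A}$, $M^*$, $M$, $\mathcal{B}^a(M)$, and each $X\in E_{\mathcal{L}}$ is written as a $2\times 2$ matrix whose $(0,0)$ entry lies in $\mathcal{A}$, $(0,1)$ entry in $M^*$, $(1,0)$ entry in $M$, and $(1,1)$ entry in $\mathcal{B}^a(M)$. $H^n(\mathcal{A},N)$ is the Hochschild cohomology of $\mathcal{A}$ with coefficients in the bimodule $N$: the cohomology of the complex $C^0=N$, $C^n$ = multilinear maps $\mathcal{A}^n\to N$, with the standard Hochschild coboundary $bf(a_1,\dots,a_{n+1})=a_1f(a_2,\dots,a_{n+1})+\sum_{i=1}^{n}(-1)^i f(a_1,\dots,a_ia_{i+1},\dots,a_{n+1})+(-1)^{n+1}f(a_1,\dots,a_n)a_{n+1}$. For a $*$-algebra $\mathcal{C}$, $\mathcal{C}[[t]]$ denotes the $*$-algebra of formal power series in one indeterminate $t$ with coefficients in $\mathcal{C}$; a $*$-homomorphism $\beta:\mathcal{A}\to E_{\mathcal{L}}[[t]]$ means $\beta(xy)=\beta(x)\beta(y)$ and $\beta(x^* )=\beta(x)^*$. *)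

From HB Require Import structures.
From mathcomp Require Import all_boot all_order all_algebra.
From mathcomp Require Import complex.
From mathcomp Require Import reals.
Set Implicit Arguments. Unset Strict Implicit. Unset Printing Implicit Defensive.
Import Order.TTheory GRing.Theory Num.Theory.
Local Open Scope ring_scope.

Definition is_involution (R : realType) (A : algType R[i]) (star : A -> A) :=
  (forall x y, star (x + y) = star x + star y) /\
  (forall (c : R[i]) x, star (c *: x) = c^* *: star x) /\
  (forall x y, star (x * y) = star y * star x) /\
  (forall x, star (star x) = x) /\
  (star 1 = 1).

Definition is_inner_product (R : realType) (H : lmodType R[i])
    (ipH : H -> H -> R[i]) :=
  (forall u v w, ipH u (v + w) = ipH u v + ipH u w) /\
  (forall u (c : R[i]) v, ipH u (c *: v) = c * ipH u v) /\
  (forall u v, ipH v u = (ipH u v)^*) /\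
  (forall u, 0 <= ipH u u) /\
  (forall u, ipH u u = 0 -> u = 0).

(* rho : A -> B(H) is an injective unital *-homomorphism into the bounded
   adjointable linear operators on H, i.e. A "is" a unital *-subalgebra of
   B(H). *)
Definition is_faithful_bounded_star_rep (R : realType) (A : algType R[i])
    (star : A -> A) (H : lmodType R[i]) (ipH : H -> H -> R[i])
    (rho : A -> H -> H) :=
  (forall x u v, rho x (u + v) = rho x u + rho x v) /\
  (forall x (c : R[i]) u, rho x (c *: u) = c *: rho x u) /\
  (forall x y u, rho (x + y) u = rho x u + rho y u) /\
  (forall (c : R[i]) x u, rho (c *: x) u = c *: rho x u) /\
  (forall x y u, rho (x * y) u = rho x (rho y u)) /\
  (forall u, rho 1 u = u) /\
  (forall x u v, ipH (rho x u) v = ipH u (rho (star x) v)) /\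
  (forall x, exists c : R[i], forall u,
      ipH (rho x u) (rho x u) <= c * ipH u u) /\
  (forall x y, (forall u, rho x u = rho y u) -> x = y).

Definition posA (R : realType) (A : algType R[i]) (H : lmodType R[i])
    (ipH : H -> H -> R[i]) (rho : A -> H -> H) (a : A) :=
  forall u, 0 <= ipH u (rho a u).

Definition linear_on (R : realType) (A : algType R[i]) (V : lmodType R[i])
    (f : A -> V) :=
  (forall x y, f (x + y) = f x + f y) /\
  (forall (c : R[i]) x, f (c *: x) = c *: f x).

Definition linear_on_fun (R : realType) (A : algType R[i]) (V : Type)
    (W : lmodType R[i]) (f : A -> V -> W) :=
  (forall x y v, f (x + y) v = f x v + f y v) /\
  (forall (c : R[i]) x v, f (c *: x) v = c *: f x v).

Definition cond_completely_positive (R : realType) (A : algType R[i])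
    (star : A -> A) (H : lmodType R[i]) (ipH : H -> H -> R[i])
    (rho : A -> H -> H) (L : A -> A) :=
  (forall x, L (star x) = star (L x)) /\
  (forall (n : nat) (xs ys : 'I_n -> A),
      \sum_(i < n) xs i * ys i = 0 ->
      posA ipH rho
        (\sum_(i < n) \sum_(j < n) star (ys i) * L (star (xs i) * xs j) * ys j)).

Definition is_preHilbert_module (R : realType) (A : algType R[i])
    (star : A -> A) (H : lmodType R[i]) (ipH : H -> H -> R[i])
    (rho : A -> H -> H) (M : lmodType R[i]) (ract : M -> A -> M)
    (ipM : M -> M -> A) :=
  (forall xi eta a, ract (xi + eta) a = ract xi a + ract eta a) /\
  (forall xi a b, ract xi (a + b) = ract xi a + ract xi b) /\
  (forall (c : R[i]) xi a, ract (c *: xi) a = c *: ract xi a) /\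
  (forall (c : R[i]) xi a, ract xi (c *: a) = c *: ract xi a) /\
  (forall xi a b, ract xi (a * b) = ract (ract xi a) b) /\
  (forall xi, ract xi 1 = xi) /\
  (forall xi eta zeta, ipM xi (eta + zeta) = ipM xi eta + ipM xi zeta) /\
  (forall xi (c : R[i]) eta, ipM xi (c *: eta) = c *: ipM xi eta) /\
  (forall xi eta a, ipM xi (ract eta a) = ipM xi eta * a) /\
  (forall xi eta, ipM eta xi = star (ipM xi eta)) /\
  (forall xi, posA ipH rho (ipM xi xi)) /\
  (forall xi, ipM xi xi = 0 -> xi = 0).

Definition is_left_action (R : realType) (A : algType R[i])
    (star : A -> A) (M : lmodType R[i]) (ract : M -> A -> M)
    (ipM : M -> M -> A) (pi : A -> M -> M) :=
  (forall x xi eta, pi x (xi + eta) = pi x xi + pi x eta) /\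
  (forall x (c : R[i]) xi, pi x (c *: xi) = c *: pi x xi) /\
  (forall x xi a, pi x (ract xi a) = ract (pi x xi) a) /\
  (forall x y xi, pi (x + y) xi = pi x xi + pi y xi) /\
  (forall (c : R[i]) x xi, pi (c *: x) xi = c *: pi x xi) /\
  (forall x y xi, pi (x * y) xi = pi x (pi y xi)) /\
  (forall xi, pi 1 xi = xi) /\
  (forall x xi eta, ipM (pi x xi) eta = ipM xi (pi (star x) eta)).

Definition is_generating_derivation (R : realType) (A : algType R[i])
    (M : lmodType R[i]) (ract : M -> A -> M) (pi : A -> M -> M)
    (delta : A -> M) :=
  linear_on delta /\
  (forall x y, delta (x * y) = pi x (delta y) + ract (delta x) y) /\
  (forall xi, exists (n : nat) (as_ bs : 'I_n -> A),
      xi = \sum_(i < n) ract (delta (as_ i)) (bs i)).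

(* E_L = B^a(A (+) M).  Elements of A (+) M are pairs; the A-valued inner    *)
(* adjointable maps; product = composition, * = adjoint.                    *)

Definition ipE (R : realType) (A : algType R[i]) (star : A -> A)
    (M : lmodType R[i]) (ipM : M -> M -> A) (u v : A * M) : A :=
  star u.1 * v.1 + ipM u.2 v.2.

Definition adjointable (R : realType) (A : algType R[i]) (star : A -> A)
    (M : lmodType R[i]) (ipM : M -> M -> A) (T : A * M -> A * M) :=
  exists S : A * M -> A * M,
    forall u v, ipE star ipM (T u) v = ipE star ipM u (S v).

Definition pit (R : realType) (A : algType R[i]) (M : lmodType R[i])
    (pi : A -> M -> M) (x : A) (u : A * M) : A * M :=
  (x * u.1, pi x u.2).

Definition entry00 (R : realType) (A : algType R[i]) (M : lmodType R[i])
    (T : A * M -> A * M) : A := (T (1, 0)).1.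
Definition entry10 (R : realType) (A : algType R[i]) (M : lmodType R[i])
    (T : A * M -> A * M) : M := (T (1, 0)).2.
Definition entry01 (R : realType) (A : algType R[i]) (M : lmodType R[i])
    (T : A * M -> A * M) : M -> A := fun xi => (T (0, xi)).1.
Definition entry11 (R : realType) (A : algType R[i]) (M : lmodType R[i])
    (T : A * M -> A * M) : M -> M := fun xi => (T (0, xi)).2.

Definition H2_vanishes (R : realType) (A : algType R[i]) (star : A -> A)
    (M : lmodType R[i]) (ipM : M -> M -> A) (pi : A -> M -> M) :=
  forall f : A -> A -> (A * M -> A * M),
    (forall x y, adjointable star ipM (f x y)) ->
    (forall x1 x2 y u, f (x1 + x2) y u = f x1 y u + f x2 y u) ->
    (forall (c : R[i]) x y u, f (c *: x) y u = c *: f x y u) ->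
    (forall x y1 y2 u, f x (y1 + y2) u = f x y1 u + f x y2 u) ->
    (forall (c : R[i]) x y u, f x (c *: y) u = c *: f x y u) ->
    (forall x y z u,
        pit pi x (f y z u) - f (x * y) z u + f x (y * z) u
        - f x y (pit pi z u) = 0) ->
    exists g : A -> (A * M -> A * M),
      (forall x, adjointable star ipM (g x)) /\
      (forall x1 x2 u, g (x1 + x2) u = g x1 u + g x2 u) /\
      (forall (c : R[i]) x u, g (c *: x) u = c *: g x u) /\
      (forall x y u,
          f x y u = pit pi x (g y u) - g (x * y) u + g x (pit pi y u)).

(* beta = sum_n t^n beta_n : A -> E_L[[t]] is a *-homomorphism:
   beta(xy) = beta(x) beta(y) (Cauchy product, composition in E_L) and
   beta(x^* ) = beta(x)^* (coefficientwise adjoint in E_L). *)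
Definition star_hom_series (R : realType) (A : algType R[i]) (star : A -> A)
    (M : lmodType R[i]) (ipM : M -> M -> A)
    (beta : nat -> A -> (A * M -> A * M)) :=
  (forall n x y u,
      beta n (x * y) u = \sum_(k < n.+1) beta k x (beta (n - k)%N y u)) /\
  (forall n x u v,
      ipE star ipM (beta n x u) v = ipE star ipM u (beta n (star x) v)).

(* The coefficients beta_n of beta = sum_n t^n beta_n are built by induction on
   n, starting from beta_0 = pi~ and beta_1 = [[0, delta^dagger], [delta, 0]].
   If beta_0, ..., beta_(n-1) are multiplicative up to order n - 1, the defect
   Phi_n(x, y) = sum_(0 < j < n) beta_j(x) beta_(n-j)(y) is an E_L-valued
   Hochschild 2-cocycle, so H^2(A, E_L) = 0 gives a map beta_n with
   beta_n(xy) = x.beta_n(y) + beta_n(x).y + Phi_n(x, y).  Phi_n is hermitian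
   (the adjoint of Phi_n(x, y) is Phi_n(y*, x* )) and homogeneous of degree n
   for the grading gamma = 1 (+) -1 of A (+) M, so averaging beta_n with
   x |-> beta_n(x* )* and then with gamma beta_n gamma keeps the equation
   while making beta_n *-preserving and of degree n, i.e. block diagonal for
   even n and block off-diagonal for odd n.  At order 2 the equation
   determines the (0,0) entry of beta_2 up to a derivation of A, and the
   cocycle identity for L shows that L itself is an admissible choice. *)
From HB Require Import structures.
From mathcomp Require Import all_boot all_order all_algebra.
From mathcomp Require Import complex.
From mathcomp Require Import reals.
From Stdlib Require Import ClassicalEpsilon.
Import Order.TTheory GRing.Theory Num.Theory.
Local Open Scope ring_scope.
Set Implicit Arguments. Unset Strict Implicit. Unset Printing Implicit Defensive.

Lemma sum_triangle_exchange (V : zmodType) n (G : nat -> nat -> nat -> V) :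
  \sum_(j < n.+1) \sum_(a < j.+1) G a (j - a)%N (n - j)%N =
  \sum_(a < n.+1) \sum_(b < (n - a).+1) G a b (n - a - b)%N.
Proof.
transitivity (\sum_(j < n.+1) \sum_(a < n.+1)
               (if (a <= j)%N then G a (j - a)%N (n - j)%N else 0)).
  apply: eq_bigr => j _.
  rewrite (big_ord_widen_cond n.+1 xpredT (fun a => G a (j - a)%N (n - j)%N)) //.
  by rewrite big_mkcond /=; apply: eq_bigr => a _; rewrite ltnS.
rewrite exchange_big /=; apply: eq_bigr => a _.
rewrite -big_mkcond /= (eq_bigl (fun j : 'I_n.+1 => xpredT j && (a <= j)%N)) //.
rewrite -(big_geq_mkord a n.+1 xpredT (fun j => G a (j - a)%N (n - j)%N)).
have a_le_n : (a <= n)%N := ltn_ord a.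
rewrite -{1}(add0n a) big_addn (subSn a_le_n) big_mkord.
by apply: eq_bigr => b _; rewrite addnK addnC subnDA.
Qed.

Lemma scaler_halfD (F : numFieldType) (V : lmodType F) (v : V) :
  2^-1 *: v + 2^-1 *: v = v.
Proof.
have half2 : 2^-1 + 2^-1 = 1 :> F by rewrite [RHS]splitr mul1r.
by rewrite -scalerDl half2 scale1r.
Qed.

Lemma selfopp_eq0 (F : numFieldType) (V : lmodType F) (v : V) : v = - v -> v = 0.
Proof. by move=> vN; rewrite -(scaler_halfD v) -scalerDr {2}vN subrr scaler0. Qed.

Lemma scaler_half_common (F : numFieldType) (V : lmodType F) (a b c a' b' : V) :
  2^-1 *: ((a + b + c) + (a' + b' + c)) = 2^-1 *: (a + a') + 2^-1 *: (b + b') + c.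
Proof. by rewrite addrACA [a + b + _]addrACA !scalerDr scaler_halfD. Qed.

Lemma conjC_half (C : numClosedFieldType) : (2^-1 : C)^* = 2^-1.
Proof. by rewrite fmorphV rmorph_nat. Qed.

Lemma conjC_sign (C : numClosedFieldType) k : ((-1) ^+ k : C)^* = (-1) ^+ k.
Proof. by rewrite rmorphXn rmorphN1. Qed.

Lemma sqr_sign (S : pzRingType) k : (-1) ^+ k * (-1) ^+ k = 1 :> S.
Proof. by rewrite -exprD -signr_odd addnn odd_double. Qed.

Section Deformation.
Variables (R : realType) (A : algType R[i]) (star : A -> A).
Variables (H : lmodType R[i]) (ipH : H -> H -> R[i]) (rho : A -> H -> H).
Variables (M : lmodType R[i]) (ract : M -> A -> M) (ipM : M -> M -> A).
Variable pi : A -> M -> M.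
Hypothesis star_invol : is_involution star.
Hypothesis M_preHilbert : is_preHilbert_module star ipH rho ract ipM.
Hypothesis pi_left_action : is_left_action star ract ipM pi.

Lemma starD x y : star (x + y) = star x + star y. Proof. by case: star_invol. Qed.
Lemma starZ c x : star (c *: x) = c^* *: star x.
Proof. by case: star_invol => _ []. Qed.
Lemma starM x y : star (x * y) = star y * star x.
Proof. by case: star_invol => _ [_ []]. Qed.
Lemma starK x : star (star x) = x. Proof. by case: star_invol => _ [_ [_ []]]. Qed.
Lemma star1 : star 1 = 1. Proof. by case: star_invol => _ [_ [_ []]]. Qed.
Lemma star0 : star 0 = 0.
Proof. by apply: (addrI (star 0)); rewrite -starD !addr0. Qed.
Lemma starN x : star (- x) = - star x.
Proof. by apply: (addrI (star x)); rewrite -starD !subrr star0. Qed.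
Lemma starB x y : star (x - y) = star x - star y.
Proof. by rewrite starD starN. Qed.

Lemma ractDl xi eta a : ract (xi + eta) a = ract xi a + ract eta a.
Proof. by case: M_preHilbert. Qed.
Lemma ractZl c xi a : ract (c *: xi) a = c *: ract xi a.
Proof. by case: M_preHilbert => _ [_ []]. Qed.
Lemma ractM xi a b : ract xi (a * b) = ract (ract xi a) b.
Proof. by case: M_preHilbert => _ [_ [_ [_ []]]]. Qed.
Lemma ract1 xi : ract xi 1 = xi.
Proof. by case: M_preHilbert => _ [_ [_ [_ [_ []]]]]. Qed.
Lemma ract0l a : ract 0 a = 0.
Proof. by apply: (addrI (ract 0 a)); rewrite -ractDl !addr0. Qed.

Lemma ipMDr xi eta zeta : ipM xi (eta + zeta) = ipM xi eta + ipM xi zeta.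
Proof. by case: M_preHilbert => _ [_ [_ [_ [_ [_ []]]]]]. Qed.
Lemma ipMZr xi c eta : ipM xi (c *: eta) = c *: ipM xi eta.
Proof. by case: M_preHilbert => _ [_ [_ [_ [_ [_ [_ []]]]]]]. Qed.
Lemma ipM_ractr xi eta a : ipM xi (ract eta a) = ipM xi eta * a.
Proof. by case: M_preHilbert => _ [_ [_ [_ [_ [_ [_ [_ []]]]]]]]. Qed.
Lemma ipMC xi eta : ipM eta xi = star (ipM xi eta).
Proof. by case: M_preHilbert => _ [_ [_ [_ [_ [_ [_ [_ [_ []]]]]]]]]. Qed.
Lemma ipM_definite xi : ipM xi xi = 0 -> xi = 0.
Proof.
have [_ [_ [_ [_ [_ [_ [_ [_ [_ [_ [_ definite]]]]]]]]]]] := M_preHilbert.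
exact: definite.
Qed.

Lemma ipM0r xi : ipM xi 0 = 0.
Proof. by apply: (addrI (ipM xi 0)); rewrite -ipMDr !addr0. Qed.
Lemma ipMNr xi eta : ipM xi (- eta) = - ipM xi eta.
Proof. by apply: (addrI (ipM xi eta)); rewrite -ipMDr !subrr ipM0r. Qed.
Lemma ipMDl xi eta zeta : ipM (xi + eta) zeta = ipM xi zeta + ipM eta zeta.
Proof. by rewrite ipMC ipMDr starD -!ipMC. Qed.
Lemma ipM0l xi : ipM 0 xi = 0.
Proof. by rewrite ipMC ipM0r star0. Qed.
Lemma ipMNl xi eta : ipM (- xi) eta = - ipM xi eta.
Proof. by rewrite ipMC ipMNr starN -ipMC. Qed.
Lemma ipMZl c xi eta : ipM (c *: xi) eta = c^* *: ipM xi eta.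
Proof. by rewrite ipMC ipMZr starZ -ipMC. Qed.
Lemma ipM_ractl xi eta a : ipM (ract xi a) eta = star a * ipM xi eta.
Proof. by rewrite ipMC ipM_ractr starM -ipMC. Qed.

Lemma piDr x xi eta : pi x (xi + eta) = pi x xi + pi x eta.
Proof. by case: pi_left_action. Qed.
Lemma piZr x c xi : pi x (c *: xi) = c *: pi x xi.
Proof. by case: pi_left_action => _ []. Qed.
Lemma pi_ract x xi a : pi x (ract xi a) = ract (pi x xi) a.
Proof. by case: pi_left_action => _ [_ []]. Qed.
Lemma piDl x y xi : pi (x + y) xi = pi x xi + pi y xi.
Proof. by case: pi_left_action => _ [_ [_ []]]. Qed.
Lemma piZl c x xi : pi (c *: x) xi = c *: pi x xi.
Proof. by case: pi_left_action => _ [_ [_ [_ []]]]. Qed.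
Lemma piM x y xi : pi (x * y) xi = pi x (pi y xi).
Proof. by case: pi_left_action => _ [_ [_ [_ [_ []]]]]. Qed.
Lemma pi_adjoint x xi eta : ipM (pi x xi) eta = ipM xi (pi (star x) eta).
Proof. by case: pi_left_action => _ [_ [_ [_ [_ [_ [_ ]]]]]]. Qed.
Lemma pi0 x : pi x 0 = 0.
Proof. by apply: (addrI (pi x 0)); rewrite -piDr !addr0. Qed.
Lemma piN x xi : pi x (- xi) = - pi x xi.
Proof. by apply: (addrI (pi x xi)); rewrite -piDr !subrr pi0. Qed.

(** * The Hilbert module A (+) M *)

Local Notation ip := (ipE star ipM).
Local Notation tpi := (pit pi).
Local Notation Op := (A * M -> A * M)%type.

Lemma ipEDr u v w : ip u (v + w) = ip u v + ip u w.
Proof. by rewrite /ipE /= mulrDr ipMDr addrACA. Qed.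
Lemma ipEDl u v w : ip (u + v) w = ip u w + ip v w.
Proof. by rewrite /ipE /= starD mulrDl ipMDl addrACA. Qed.
Lemma ipEZr u c v : ip u (c *: v) = c *: ip u v.
Proof. by rewrite /ipE /= ipMZr -scalerAr scalerDr. Qed.
Lemma ipEZl c u v : ip (c *: u) v = c^* *: ip u v.
Proof. by rewrite /ipE /= ipMZl starZ -scalerAl scalerDr. Qed.
Lemma ipE0r u : ip u 0 = 0.
Proof. by apply: (addrI (ip u 0)); rewrite -ipEDr !addr0. Qed.
Lemma ipE0l u : ip 0 u = 0.
Proof. by apply: (addrI (ip 0 u)); rewrite -ipEDl !addr0. Qed.
Lemma ipENr u v : ip u (- v) = - ip u v.
Proof. by apply: (addrI (ip u v)); rewrite -ipEDr !subrr ipE0r. Qed.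
Lemma ipENl u v : ip (- u) v = - ip u v.
Proof. by apply: (addrI (ip u v)); rewrite -ipEDl !subrr ipE0l. Qed.
Lemma ipEC u v : ip v u = star (ip u v).
Proof. by rewrite /ipE starD starM starK -ipMC. Qed.
Lemma ipE_sumr u I (r : seq I) (P : pred I) (F : I -> A * M) :
  ip u (\sum_(i <- r | P i) F i) = \sum_(i <- r | P i) ip u (F i).
Proof. exact: (big_morph _ (ipEDr u) (ipE0r u)). Qed.
Lemma ipE_suml u I (r : seq I) (P : pred I) (F : I -> A * M) :
  ip (\sum_(i <- r | P i) F i) u = \sum_(i <- r | P i) ip (F i) u.
Proof. exact: (big_morph (ip^~ u) (fun a b => ipEDl a b u) (ipE0l u)). Qed.

Definition pair_ract (u : A * M) (b : A) : A * M := (u.1 * b, ract u.2 b).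

Lemma ipE_ractl u v b : ip (pair_ract u b) v = star b * ip u v.
Proof. by rewrite /ipE /= ipM_ractl starM mulrDr !mulrA. Qed.

Lemma ipE_extr v1 v2 : (forall w, ip w v1 = ip w v2) -> v1 = v2.
Proof.
move=> eq_ip; have := eq_ip (1, 0); rewrite /ipE /= star1 !mul1r !ipM0l !addr0.
move=> eq1; apply: injective_projections => //.
apply/eqP; rewrite -subr_eq0; apply/eqP.
have := eq_ip (0, v1.2 - v2.2); rewrite /ipE /= star0 !mul0r !add0r => eq2.
by apply: ipM_definite; rewrite ipMDr ipMNr eq2 -ipMNr -ipMDr subrr ipM0r.
Qed.

Lemma ipE_extl v1 v2 : (forall w, ip v1 w = ip v2 w) -> v1 = v2.
Proof. by move=> eq_ip; apply: ipE_extr => w; rewrite ipEC eq_ip -ipEC. Qed.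

Definition is_adjoint (T S : Op) := forall u v, ip (T u) v = ip u (S v).

Section Adjoint.
Variables T S : Op.
Hypothesis TS : is_adjoint T S.

Lemma adjointD u1 u2 : T (u1 + u2) = T u1 + T u2.
Proof. by apply: ipE_extl => w; rewrite ipEDl !TS ipEDl. Qed.
Lemma adjointZ c u : T (c *: u) = c *: T u.
Proof. by apply: ipE_extl => w; rewrite ipEZl !TS ipEZl. Qed.
Lemma adjoint_ract u b : T (pair_ract u b) = pair_ract (T u) b.
Proof. by apply: ipE_extl => w; rewrite ipE_ractl !TS ipE_ractl. Qed.
Lemma adjoint0 : T 0 = 0.
Proof. by apply: ipE_extl => w; rewrite TS !ipE0l. Qed.
Lemma adjointN u : T (- u) = - T u.
Proof. by apply: ipE_extl => w; rewrite TS !ipENl TS. Qed.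
Lemma adjoint_sum I (r : seq I) (P : pred I) (F : I -> A * M) :
  T (\sum_(i <- r | P i) F i) = \sum_(i <- r | P i) T (F i).
Proof. exact: (big_morph T adjointD adjoint0). Qed.
Lemma adjoint_sym : is_adjoint S T.
Proof. by move=> u v; rewrite ipEC -TS -ipEC. Qed.

End Adjoint.

Definition grading (u : A * M) : A * M := (u.1, - u.2).

Lemma gradingD u v : grading (u + v) = grading u + grading v.
Proof. by apply: injective_projections => //=; rewrite opprD. Qed.
Lemma gradingZ c u : grading (c *: u) = c *: grading u.
Proof. by apply: injective_projections => //=; rewrite scalerN. Qed.
Lemma gradingK u : grading (grading u) = u.
Proof. by apply: injective_projections => //=; rewrite opprK. Qed.
Lemma grading0 : grading 0 = 0.
Proof. by apply: injective_projections => //=; rewrite oppr0. Qed.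
Lemma grading_on_M xi : grading (0, xi) = - (0, xi).
Proof. by apply: injective_projections; rewrite /= ?oppr0. Qed.
Lemma grading_selfadjoint : is_adjoint grading grading.
Proof. by move=> u v; rewrite /ipE /= ipMNl ipMNr. Qed.
Lemma grading_sum I (r : seq I) (P : pred I) (F : I -> A * M) :
  grading (\sum_(i <- r | P i) F i) = \sum_(i <- r | P i) grading (F i).
Proof. exact: (big_morph _ gradingD grading0). Qed.

Lemma tpiD x u v : tpi x (u + v) = tpi x u + tpi x v.
Proof. by apply: injective_projections => /=; rewrite ?mulrDr ?piDr. Qed.
Lemma tpiZ x c u : tpi x (c *: u) = c *: tpi x u.
Proof. by apply: injective_projections => /=; rewrite ?scalerAr ?piZr. Qed.
Lemma tpiN x u : tpi x (- u) = - tpi x u.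
Proof. by rewrite -scaleN1r tpiZ scaleN1r. Qed.
Lemma tpi0 x : tpi x 0 = 0.
Proof. by apply: injective_projections => /=; rewrite ?mulr0 ?pi0. Qed.
Lemma tpiDl x y u : tpi (x + y) u = tpi x u + tpi y u.
Proof. by apply: injective_projections => /=; rewrite ?mulrDl ?piDl. Qed.
Lemma tpiZl c x u : tpi (c *: x) u = c *: tpi x u.
Proof. by apply: injective_projections => /=; rewrite ?scalerAl ?piZl. Qed.
Lemma tpiM x y u : tpi (x * y) u = tpi x (tpi y u).
Proof. by apply: injective_projections => /=; rewrite ?mulrA ?piM. Qed.
Lemma tpi_adjoint x : is_adjoint (tpi x) (tpi (star x)).
Proof. by move=> u v; rewrite /ipE /= starM mulrA pi_adjoint. Qed.
Lemma tpi_grading x u : grading (tpi x u) = tpi x (grading u).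
Proof. by apply: injective_projections => //=; rewrite piN. Qed.
Lemma tpi_sum x I (r : seq I) (P : pred I) (F : I -> A * M) :
  tpi x (\sum_(i <- r | P i) F i) = \sum_(i <- r | P i) tpi x (F i).
Proof. exact: adjoint_sum (tpi_adjoint x) _ _ _ _. Qed.

(** * Graded coefficients and the obstruction cocycle *)

Definition graded_coeff (k : nat) (b : A -> Op) :=
  [/\ forall x y u, b (x + y) u = b x u + b y u,
      forall c x u, b (c *: x) u = c *: b x u,
      forall x, is_adjoint (b x) (b (star x)) &
      forall x u, grading (b x u) = (-1) ^+ k *: b x (grading u)].

Section GradedCoeff.
Variables (k : nat) (b : A -> Op).
Hypothesis bk : graded_coeff k b.

Lemma gcDl x y u : b (x + y) u = b x u + b y u. Proof. by case: bk. Qed.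
Lemma gcZl c x u : b (c *: x) u = c *: b x u. Proof. by case: bk. Qed.
Lemma gc_adjoint x : is_adjoint (b x) (b (star x)). Proof. by case: bk. Qed.
Lemma gc_grading x u : grading (b x u) = (-1) ^+ k *: b x (grading u).
Proof. by case: bk. Qed.
Lemma gcDr x u v : b x (u + v) = b x u + b x v.
Proof. exact: adjointD (gc_adjoint x) u v. Qed.
Lemma gcZr x c u : b x (c *: u) = c *: b x u.
Proof. exact: adjointZ (gc_adjoint x) c u. Qed.
Lemma gc0r x : b x 0 = 0. Proof. exact: adjoint0 (gc_adjoint x). Qed.
Lemma gc_sumr x I (r : seq I) (P : pred I) (F : I -> A * M) :
  b x (\sum_(i <- r | P i) F i) = \sum_(i <- r | P i) b x (F i).
Proof. exact: adjoint_sum (gc_adjoint x) _ _ _ _. Qed.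

Lemma gc_entry00_ract x y : (b x (y, 0)).1 = entry00 (b x) * y.
Proof.
have -> : (y, 0) = pair_ract (1, 0) y :> A * M.
  by apply: injective_projections; rewrite /= ?mul1r ?ract0l.
by rewrite (adjoint_ract (gc_adjoint x)).
Qed.

Lemma gc_entry00_star x : star (entry00 (b x)) = entry00 (b (star x)).
Proof.
have := gc_adjoint x (1, 0) (1, 0).
by rewrite /ipE /= mulr1 ipM0r ipM0l !addr0 star1 mul1r.
Qed.

End GradedCoeff.

Lemma graded_coeff0 k : graded_coeff k (fun _ _ => 0).
Proof.
split=> [x y u|c x u|x u v|x u]; first by rewrite addr0.
- by rewrite scaler0.
- by rewrite ipE0l ipE0r.
- by rewrite grading0 scaler0.
Qed.

Lemma graded_coeff_tpi : graded_coeff 0 tpi.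
Proof.
split; [exact: tpiDl | exact: tpiZl | exact: tpi_adjoint |].
by move=> x u; rewrite expr0 scale1r tpi_grading.
Qed.

Lemma even_coeff_diagonal k b x : graded_coeff (2 * k) b ->
  entry10 (b x) = 0 /\ forall xi, entry01 (b x) xi = 0.
Proof.
move=> bk; have even : (-1) ^+ (2 * k) = 1 :> R[i].
  by rewrite exprM expr2 mulrNN mulr1 expr1n.
split=> [|xi].
  have := congr1 snd (gc_grading bk x (1, 0)).
  rewrite even scale1r /grading /= oppr0 => eq2.
  by apply: selfopp_eq0; rewrite /entry10 eq2.
have := gc_grading bk x (0, xi).
rewrite even scale1r grading_on_M (adjointN (gc_adjoint bk x)).
by move=> /(congr1 fst) /selfopp_eq0.
Qed.

Lemma odd_coeff_offdiagonal k b x : graded_coeff (2 * k).+1 b ->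
  entry00 (b x) = 0 /\ forall xi, entry11 (b x) xi = 0.
Proof.
move=> bk; have odd : (-1) ^+ (2 * k).+1 = -1 :> R[i].
  by rewrite exprS exprM expr2 mulrNN mulr1 expr1n mulr1.
split=> [|xi].
  have := congr1 fst (gc_grading bk x (1, 0)).
  by rewrite odd scaleN1r /grading /= oppr0 => /selfopp_eq0.
have := gc_grading bk x (0, xi).
rewrite odd scaleN1r grading_on_M (adjointN (gc_adjoint bk x)) opprK.
move=> /(congr1 snd) /= eq2.
by apply: selfopp_eq0; rewrite /entry11 eq2.
Qed.

Definition mul_coeff (s : nat -> A -> Op) k :=
  forall x y u, s k (x * y) u = \sum_(j < k.+1) s j x (s (k - j)%N y u).

Lemma eq_mul_coeff s t k :
  (forall j, (j <= k)%N -> s j = t j) -> mul_coeff t k -> mul_coeff s k.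
Proof.
move=> eq_st tk x y u; rewrite eq_st // tk; apply: eq_bigr => j _.
by rewrite !eq_st // ?leq_subr // -ltnS.
Qed.

(* Terms of index >= n are cut off, so that the j = 0 and j = n terms of the
   Cauchy sum below vanish: obstruction s n is the sum over 0 < j < n. *)
Definition truncated (s : nat -> A -> Op) n j : A -> Op :=
  if (j < n)%N then s j else fun _ _ => 0.

Definition obstruction (s : nat -> A -> Op) n x y u :=
  \sum_(j < n.+1) truncated s n j x (truncated s n (n - j)%N y u).

Lemma eq_obstruction s t n : (forall k, (k < n)%N -> s k = t k) ->
  forall x y u, obstruction s n x y u = obstruction t n x y u.
Proof.
move=> eq_st x y u; rewrite /obstruction; apply: eq_bigr => j _.
have eq_trunc i : truncated s n i = truncated t n i.
  by rewrite /truncated; case: ifP => // /eq_st ->.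
by rewrite !eq_trunc.
Qed.

Lemma cauchy_sum_obstruction s n x y u : (forall x u, s 0%N x u = tpi x u) ->
  \sum_(j < n.+2) s j x (s (n.+1 - j)%N y u) =
  tpi x (s n.+1 y u) + s n.+1 x (tpi y u) + obstruction s n.+1 x y u.
Proof.
move=> s0; rewrite big_ord_recr /= big_ord_recl /obstruction big_ord_recr /=.
rewrite big_ord_recl /= !subn0 subnn /truncated ltnn ltn0Sn !s0 tpi0 add0r addr0.
rewrite addrAC; congr (_ + _); apply: eq_bigr => i _.
by rewrite /bump /= subSS ltnS ltn_ord ltnS leq_subr.
Qed.

Section Obstruction.
Variables (s : nat -> A -> Op) (n : nat).
Hypothesis s_graded : forall k, (k < n)%N -> graded_coeff k (s k).

Lemma truncated_graded j : graded_coeff j (truncated s n j).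
Proof.
by rewrite /truncated; case: ifP => [/s_graded|] // _; apply: graded_coeff0.
Qed.

Lemma obstruction_adjoint x y :
  is_adjoint (obstruction s n x y) (obstruction s n (star y) (star x)).
Proof.
move=> u v; rewrite /obstruction ipE_suml ipE_sumr.
rewrite [RHS](reindex_inj rev_ord_inj) /=; apply: eq_bigr => j _.
rewrite subSS (gc_adjoint (truncated_graded j)) (gc_adjoint (truncated_graded _)).
by rewrite subKn // -ltnS.
Qed.

Lemma obstructionDx x1 x2 y u :
  obstruction s n (x1 + x2) y u = obstruction s n x1 y u + obstruction s n x2 y u.
Proof.
rewrite /obstruction -big_split; apply: eq_bigr => j _.
by rewrite (gcDl (truncated_graded j)).
Qed.
Lemma obstructionZx c x y u :
  obstruction s n (c *: x) y u = c *: obstruction s n x y u.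
Proof.
rewrite /obstruction scaler_sumr; apply: eq_bigr => j _.
by rewrite (gcZl (truncated_graded j)).
Qed.
Lemma obstructionDy x y1 y2 u :
  obstruction s n x (y1 + y2) u = obstruction s n x y1 u + obstruction s n x y2 u.
Proof.
rewrite /obstruction -big_split; apply: eq_bigr => j _.
by rewrite (gcDl (truncated_graded _)) (gcDr (truncated_graded j)).
Qed.
Lemma obstructionZy c x y u :
  obstruction s n x (c *: y) u = c *: obstruction s n x y u.
Proof.
rewrite /obstruction scaler_sumr; apply: eq_bigr => j _.
by rewrite (gcZl (truncated_graded _)) (gcZr (truncated_graded j)).
Qed.

Lemma obstruction_grading x y u :
  grading (obstruction s n x y u) = (-1) ^+ n *: obstruction s n x y (grading u).
Proof.
rewrite /obstruction grading_sum scaler_sumr; apply: eq_bigr => j _.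
rewrite (gc_grading (truncated_graded j)) (gc_grading (truncated_graded _)).
by rewrite (gcZr (truncated_graded j)) scalerA -exprD subnKC // -ltnS.
Qed.

Hypothesis s_mul : forall k, (k < n)%N -> mul_coeff s k.
Hypothesis s0 : forall x u, s 0%N x u = tpi x u.
Hypothesis n_gt0 : (0 < n)%N.

Local Notation t := (truncated s n).

Lemma truncated_mul j x y u : (j < n)%N ->
  t j (x * y) u = \sum_(a < j.+1) t a x (t (j - a)%N y u).
Proof.
move=> jn; rewrite /truncated jn (s_mul jn); apply: eq_bigr => a _.
have an : (a < n)%N by apply: leq_ltn_trans jn; rewrite -ltnS.
have jan : (j - a < n)%N by apply: leq_ltn_trans jn; rewrite leq_subr.
by rewrite an jan.
Qed.

Lemma truncated0 x u : t 0%N x u = tpi x u.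
Proof. by rewrite /truncated n_gt0 s0. Qed.

Lemma truncatedn x u : t n x u = 0.
Proof. by rewrite /truncated ltnn. Qed.

(* Both sides of the cocycle identity expand into the sum of the
   t_a(x) t_b(y) t_c(z) over a + b + c = n, up to boundary terms. *)
Lemma obstruction_cocycle x y z u :
  tpi x (obstruction s n y z u) - obstruction s n (x * y) z u
  + obstruction s n x (y * z) u - obstruction s n x y (tpi z u) = 0.
Proof.
pose G a b c := t a x (t b y (t c z u)).
have Exy : obstruction s n (x * y) z u =
    \sum_(j < n.+1) \sum_(a < j.+1) G a (j - a)%N (n - j)%N
    - obstruction s n x y (tpi z u).
  rewrite big_ord_recr /= subnn /obstruction [in LHS]big_ord_recr /=.
  rewrite truncatedn addr0 -addrA [X in _ + X](_ : _ = 0) ?addr0; last first.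
    by apply/eqP; rewrite subr_eq0; apply/eqP/eq_bigr => a _; rewrite /G truncated0.
  by apply: eq_bigr => j _; rewrite truncated_mul.
have Eyz : obstruction s n x (y * z) u =
    \sum_(a < n.+1) \sum_(b < (n - a).+1) G a b (n - a - b)%N
    - tpi x (obstruction s n y z u).
  rewrite big_ord_recl /= subn0 /obstruction [in LHS]big_ord_recl /= subn0.
  rewrite truncatedn (gc0r (truncated_graded 0)) add0r addrC addrA.
  rewrite [X in X + _](_ : _ = 0) ?add0r.
    apply: eq_bigr => i _; rewrite /bump /= truncated_mul ?ltn_subrL ?n_gt0 //.
    by rewrite (gc_sumr (truncated_graded _)).
  rewrite tpi_sum; apply/eqP; rewrite addrC subr_eq0; apply/eqP.
  by apply: eq_bigr => b _; rewrite /G truncated0.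
rewrite Exy Eyz sum_triangle_exchange.
by rewrite opprB addrA addrC !addrA subrK addrC addrA subrK subrr.
Qed.

End Obstruction.

(** * Construction of beta *)

Variables (delta : A -> M) (L : A -> A).
Hypothesis delta_derivation : is_generating_derivation ract pi delta.
Hypothesis L_linear : linear_on L.
Hypothesis L_hermitian : forall x, L (star x) = star (L x).
Hypothesis L_cocycle :
  forall x y, L (x * y) - x * L y - L x * y = ipM (delta (star x)) (delta y).
Hypothesis H2_0 : H2_vanishes star ipM pi.

Lemma deltaD x y : delta (x + y) = delta x + delta y.
Proof. by case: delta_derivation => [[]]. Qed.
Lemma deltaZ c x : delta (c *: x) = c *: delta x.
Proof. by case: delta_derivation => [[]]. Qed.
Lemma deltaM x y : delta (x * y) = pi x (delta y) + ract (delta x) y.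
Proof. by case: delta_derivation => _ []. Qed.

Lemma LD x y : L (x + y) = L x + L y. Proof. by case: L_linear. Qed.
Lemma LZ c x : L (c *: x) = c *: L x. Proof. by case: L_linear. Qed.

Definition beta1 (x : A) (u : A * M) : A * M :=
  (ipM (delta (star x)) u.2, ract (delta x) u.1).

Lemma graded_coeff_beta1 : graded_coeff 1 beta1.
Proof.
split.
- move=> x y u; apply: injective_projections => /=.
  by rewrite starD deltaD ipMDl.
  by rewrite deltaD ractDl.
- move=> c x u; apply: injective_projections => /=.
  by rewrite starZ deltaZ ipMZl conjCK.
  by rewrite deltaZ ractZl.
- by move=> x u v; rewrite /ipE /= starK -ipMC ipM_ractl ipM_ractr addrC.
- move=> x u; rewrite expr1 scaleN1r; apply: injective_projections => /=.
  by rewrite ipMNr opprK.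
  by [].
Qed.

Section Extension.
Variables (s : nat -> A -> Op) (n : nat).
Hypothesis s_graded : forall k, (k < n)%N -> graded_coeff k (s k).
Hypothesis s_mul : forall k, (k < n)%N -> mul_coeff s k.
Hypothesis s0 : forall x u, s 0%N x u = tpi x u.
Hypothesis s1 : forall x u, s 1%N x u = beta1 x u.
Hypothesis n_gt1 : (1 < n)%N.

Definition extends_mul (b : A -> Op) := forall x y u,
  b (x * y) u = tpi x (b y u) + b x (tpi y u) + obstruction s n x y u.

Lemma exists_mul_extension : exists c : A -> Op,
  [/\ forall x y u, c (x + y) u = c x u + c y u,
      forall k x u, c (k *: x) u = k *: c x u,
      forall x, exists S, is_adjoint (c x) S & extends_mul c].
Proof.
have [g [g_adj [gD [gZ g_cobound]]]] := H2_0 (f := obstruction s n)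
  (fun x y => ex_intro _ _ (obstruction_adjoint s_graded x y))
  (obstructionDx s_graded) (obstructionZx s_graded)
  (obstructionDy s_graded) (obstructionZy s_graded)
  (obstruction_cocycle s_graded s_mul s0 (ltnW n_gt1)).
exists (fun x u => - g x u); split.
- by move=> x y u; rewrite gD opprD.
- by move=> k x u; rewrite gZ scalerN.
- move=> x; have [S gS] := g_adj x; exists (fun v => - S v) => u v.
  by rewrite ipENl ipENr gS.
- move=> x y u; rewrite g_cobound tpiN.
  have rearrange (V : zmodType) (P G Q : V) : - G = - P - Q + (P - G + Q).
    by rewrite addrC addrAC !addrA subrK addrC addrA addNr add0r.
  exact: rearrange.
Qed.

(* Averaging c with its formal adjoint x |-> c(x* )*, which solves the same
   equation because the obstruction is hermitian. *)
Lemma exists_adjoint_mul_extension : exists d : A -> Op,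
  [/\ forall x y u, d (x + y) u = d x u + d y u,
      forall k x u, d (k *: x) u = k *: d x u,
      forall x, is_adjoint (d x) (d (star x)) & extends_mul d].
Proof.
have [c [cD cZ c_adj c_mul]] := exists_mul_extension.
pose S x := epsilon (inhabits id) (is_adjoint (c x)).
have cS x : is_adjoint (c x) (S x) by apply: epsilon_spec; exact: c_adj.
have ipS x w v : ip w (S x v) = ip (c x w) v by rewrite cS.
have SD x1 x2 v : S (star (x1 + x2)) v = S (star x1) v + S (star x2) v.
  by apply: ipE_extr => w; rewrite ipS starD cD ipEDl ipEDr !ipS.
have SZ k x v : S (star (k *: x)) v = k *: S (star x) v.
  by apply: ipE_extr => w; rewrite ipS starZ cZ ipEZl conjCK ipEZr ipS.
have S_mul x y v : S (star (x * y)) v =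
    tpi x (S (star y) v) + S (star x) (tpi y v) + obstruction s n x y v.
  apply: ipE_extr => w.
  rewrite ipS starM c_mul !ipEDl !ipEDr tpi_adjoint (cS (star x)) starK.
  rewrite (obstruction_adjoint s_graded) !starK; congr (_ + _).
  by rewrite addrC -ipS tpi_adjoint starK.
exists (fun x u => 2^-1 *: (c x u + S (star x) u)); split.
- by move=> x y u; rewrite cD SD addrACA scalerDr.
- by move=> k x u; rewrite cZ SZ -scalerDr !scalerA mulrC.
- move=> x u v; rewrite ipEZl conjC_half ipEDl ipEZr ipEDr starK cS.
  by rewrite (adjoint_sym (cS (star x))) addrC.
- by move=> x y u; rewrite c_mul S_mul scaler_half_common tpiZ tpiD scalerDr.
Qed.

(* Averaging d with gamma d gamma, which solves the same equation because the
   obstruction is homogeneous of degree n. *)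
Lemma exists_graded_mul_extension :
  exists e : A -> Op, graded_coeff n e /\ extends_mul e.
Proof.
have [d [dD dZ d_adj d_mul]] := exists_adjoint_mul_extension.
exists (fun x u => 2^-1 *: (d x u + (-1) ^+ n *: grading (d x (grading u)))).
split; first split.
- move=> x y u; rewrite !dD gradingD [(-1) ^+ n *: _]scalerDr.
  by rewrite addrACA scalerDr.
- move=> k x u; rewrite !dZ gradingZ scalerA mulrC -scalerA -scalerDr.
  by rewrite !scalerA mulrC.
- move=> x u v; rewrite ipEZl conjC_half ipEDl ipEZl conjC_sign.
  rewrite (grading_selfadjoint (d x (grading u)) v) !d_adj (grading_selfadjoint u).
  by rewrite ipEZr ipEDr ipEZr.
- move=> x u; rewrite gradingZ gradingD gradingZ gradingK scalerA.
  rewrite [_ * 2^-1]mulrC -scalerA; congr (_ *: _).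
  by rewrite scalerDr scalerA sqr_sign scale1r gradingK addrC.
- move=> x y u; rewrite d_mul [d (x * y) _]d_mul !gradingD tpi_grading.
  rewrite -[tpi y (grading u)]tpi_grading (obstruction_grading s_graded) gradingK.
  rewrite [(-1) ^+ n *: (_ + _ + _)]scalerDr [(-1) ^+ n *: (_ + _)]scalerDr.
  by rewrite scalerA sqr_sign scale1r -tpiZ scaler_half_common -tpiD -tpiZ.
Qed.

Definition good_extension (b : A -> Op) :=
  [/\ graded_coeff n b, extends_mul b & (n = 2%N -> forall x, entry00 (b x) = L x)].

Lemma obstruction2_entry00 x y : n = 2%N ->
  (obstruction s n x y (1, 0)).1 = ipM (delta (star x)) (delta y).
Proof.
move=> n2; rewrite /obstruction n2 !big_ord_recr big_ord0 /= add0r /truncated /=.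
by rewrite s0 !s1 /= mulr0 ract1 add0r addr0.
Qed.

Lemma extends_mul_add_derivation e (D : A -> A) :
  ~~ odd n -> graded_coeff n e -> extends_mul e ->
  linear_on D -> (forall x, star (D x) = D (star x)) ->
  (forall x y, D (x * y) = x * D y + D x * y) ->
  let e' x u := e x u + (D x * u.1, 0) in graded_coeff n e' /\ extends_mul e'.
Proof.
move=> n_even e_graded e_mul [DD DZ] D_star D_derivation e'.
split; first split.
- move=> x y u; apply: injective_projections => /=.
    by rewrite (gcDl e_graded) DD mulrDl addrACA.
  by rewrite (gcDl e_graded) !addr0.
- move=> k x u; apply: injective_projections => /=.
    by rewrite (gcZl e_graded) DZ -scalerAl scalerDr.
  by rewrite (gcZl e_graded) !addr0.
- move=> x u v; rewrite ipEDl ipEDr (gc_adjoint e_graded); congr (_ + _).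
  by rewrite /ipE /= starM ipM0l ipM0r D_star mulrA.
- move=> x u; rewrite gradingD (gc_grading e_graded) -signr_odd (negbTE n_even).
  by rewrite !scale1r; congr (_ + _); apply: injective_projections => //=; rewrite oppr0.
- move=> x y u; rewrite /e' e_mul tpiD.
  have -> : (D (x * y) * u.1, 0) =
      tpi x (D y * u.1, 0) + (D x * (tpi y u).1, 0) :> A * M.
    apply: injective_projections => /=; last by rewrite pi0 addr0.
    by rewrite D_derivation mulrDl !mulrA.
  have rearrange (V : zmodType) (P Q F W2 W3 : V) :
      P + Q + F + (W2 + W3) = P + W2 + (Q + W3) + F.
    by rewrite -[LHS]addrA [F + _]addrC addrA addrACA.
  exact: rearrange.
Qed.

(* At order 2 the (0,0) entry D := L - e_00 of the correction is a derivation
   of A: L and e_00 satisfy the same cocycle equation. *)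
Lemma exists_good_extension : exists b, good_extension b.
Proof.
have [e [e_graded e_mul]] := exists_graded_mul_extension.
case: (n =P 2%N) => [n2 | n_neq2]; last by exists e; split.
pose D x := L x - entry00 (e x).
have D_derivation x y : D (x * y) = x * D y + D x * y.
  have := congr1 fst (e_mul x y (1, 0)).
  rewrite /pit /= pi0 !(gc_entry00_ract e_graded) !mulr1 obstruction2_entry00 //.
  move=> e00M.
  have LM : L (x * y) = x * L y + L x * y + ipM (delta (star x)) (delta y).
    by rewrite -L_cocycle addrC -[L (x * y) - _ - _]addrA -opprD subrK.
  rewrite /D LM e00M [X in _ - X]addrC addrKA opprD addrACA.
  by rewrite mulrBr mulrBl.
have D_linear : linear_on D.
  split=> [x y|k x]; rewrite /D /entry00 ?LD ?LZ.
    by rewrite (gcDl e_graded) /= opprD addrACA.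
  by rewrite (gcZl e_graded) /= scalerBr.
have D_star x : star (D x) = D (star x).
  by rewrite /D starB -L_hermitian (gc_entry00_star e_graded).
have n_even : ~~ odd n by rewrite n2.
have [e'_graded e'_mul] :=
  extends_mul_add_derivation n_even e_graded e_mul D_linear D_star D_derivation.
exists (fun x u => e x u + (D x * u.1, 0)); split => // _ x.
by rewrite /entry00 /= mulr1 /D addrC subrK.
Qed.

End Extension.

Definition next_coeff (s : nat -> A -> Op) (n : nat) : A -> Op :=
  match n with
  | 0 => tpi
  | 1 => beta1
  | _ => epsilon (inhabits (fun _ _ => 0)) (good_extension s n)
  end.

(* beta_upto m k is the k-th coefficient for k <= m (and tpi beyond). *)
Fixpoint beta_upto (m : nat) : nat -> A -> Op :=
  if m is m'.+1 then
    fun k => if k == m then next_coeff (beta_upto m') m else beta_upto m' k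
  else fun _ => tpi.

Definition beta n := beta_upto n n.

Lemma beta_uptoE m k : (k <= m)%N -> beta_upto m k = beta k.
Proof.
elim: m => [|m IH]; first by rewrite leqn0 => /eqP ->.
by rewrite leq_eqVlt => /orP [/eqP -> // | km]; rewrite /= (ltn_eqF km) IH.
Qed.

Lemma betaS n : beta n.+1 = next_coeff (beta_upto n) n.+1.
Proof. by rewrite /beta /= eqxx. Qed.

Lemma beta_spec n : [/\ graded_coeff n (beta n), mul_coeff beta n &
  (n = 2%N -> forall x, entry00 (beta n x) = L x)].
Proof.
elim/ltn_ind: n => -[|[|n]] IH.
- split => //; first exact: graded_coeff_tpi.
  by move=> x y u; rewrite big_ord1 /beta /= tpiM.
- split => //; first exact: graded_coeff_beta1.
  move=> x y u; rewrite big_ord_recr big_ord1 /= /beta /=.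
  apply: injective_projections => /=.
    by rewrite starM deltaM ipMDl pi_adjoint starK ipM_ractl starK addrC.
  by rewrite deltaM ractDl pi_ract ractM.
set s := beta_upto n.+1.
have sE k : (k <= n.+1)%N -> s k = beta k by exact: beta_uptoE.
have s_graded k : (k < n.+2)%N -> graded_coeff k (s k).
  by move=> kn; rewrite sE //; case: (IH k kn).
have s_mul k : (k < n.+2)%N -> mul_coeff s k.
  move=> kn; case: (IH k kn) => _ beta_mul _; apply: eq_mul_coeff beta_mul => j jk.
  by apply: sE; apply: leq_trans jk _; rewrite -ltnS.
have s0 x u : s 0%N x u = tpi x u by rewrite sE.
have s1 x u : s 1%N x u = beta1 x u by rewrite sE.
have [b b_good] := exists_good_extension s_graded s_mul s0 s1 (isT : (1 < n.+2)%N).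
have : good_extension s n.+2 (beta n.+2).
  by rewrite betaS; apply: epsilon_spec; exists b.
case=> b_graded b_mul b_L; split => // x y u.
by rewrite b_mul cauchy_sum_obstruction // (eq_obstruction (t := beta)).
Qed.

End Deformation.

Theorem theorem3p1
    (R : realType) (A : algType R[i]) (star : A -> A)
    (H : lmodType R[i]) (ipH : H -> H -> R[i]) (rho : A -> H -> H)
    (L : A -> A)
    (M : lmodType R[i]) (ract : M -> A -> M) (ipM : M -> M -> A)
    (pi : A -> M -> M) (delta : A -> M) :
  is_involution star ->
  is_inner_product ipH ->
  is_faithful_bounded_star_rep star ipH rho ->
  linear_on L ->
  cond_completely_positive star ipH rho L ->
  L 1 = 0 ->
  is_preHilbert_module star ipH rho ract ipM ->
  is_left_action star ract ipM pi ->
  is_generating_derivation ract pi delta ->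
  (forall x y, L (x * y) - x * L y - L x * y = ipM (delta (star x)) (delta y)) ->
  H2_vanishes star ipM pi ->
  exists (beta : nat -> A -> (A * M -> A * M))
         (theta00 : nat -> A -> A) (theta10 : nat -> A -> M)
         (theta01 : nat -> A -> (M -> A)) (theta11 : nat -> A -> (M -> M)),
    star_hom_series star ipM beta /\
    (forall n, linear_on (theta00 n)) /\
    (forall n, linear_on (theta10 n)) /\
    (forall n, linear_on_fun (theta01 n)) /\
    (forall n, linear_on_fun (theta11 n)) /\
    (forall (k : nat) x,
        entry00 (beta (2 * k)%N x) = theta00 k x /\
        (forall xi, entry11 (beta (2 * k)%N x) xi = theta11 k.+1 x xi) /\
        entry10 (beta (2 * k)%N x) = 0 /\
        (forall xi, entry01 (beta (2 * k)%N x) xi = 0)) /\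
    (forall (k : nat) x,
        entry10 (beta (2 * k).+1 x) = theta10 k.+1 x /\
        (forall xi, entry01 (beta (2 * k).+1 x) xi = theta01 k.+1 x xi) /\
        entry00 (beta (2 * k).+1 x) = 0 /\
        (forall xi, entry11 (beta (2 * k).+1 x) xi = 0)) /\
    (forall x, theta00 0%N x = x) /\
    (forall x, theta00 1%N x = L x) /\
    (forall x, theta10 1%N x = delta x) /\
    (forall x xi, theta01 1%N x xi = ipM (delta (star x)) xi) /\
    (forall x xi, theta11 1%N x xi = pi x xi).
Proof.
move=> star_invol _ _ L_linear [L_hermitian _] _ M_preHilbert pi_left_action
  delta_derivation L_cocycle H2_0.
have b_spec := beta_spec star_invol M_preHilbert pi_left_action delta_derivation
  L_linear L_hermitian L_cocycle H2_0.
set b := beta star ract ipM pi delta L in b_spec *.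
have b_graded n : graded_coeff star ipM n (b n) by case: (b_spec n).
exists b, (fun k x => (b (2 * k)%N x (1, 0)).1),
  (fun k x => (b (2 * k.-1).+1 x (1, 0)).2),
  (fun k x xi => (b (2 * k.-1).+1 x (0, xi)).1),
  (fun k x xi => (b (2 * k.-1)%N x (0, xi)).2).
split; first by split=> [n | n x u v]; [case: (b_spec n) | exact: gc_adjoint].
do 4 (split; first by move=> n; split=> *;
  rewrite ?(gcDl (b_graded _)) ?(gcZl (b_graded _))).
split.
  move=> k x; have [b10 b01] :=
    even_coeff_diagonal star_invol M_preHilbert x (b_graded (2 * k)%N).
  by split=> //; split=> //; split.
split.
  move=> k x; have [b00 b11] :=
    odd_coeff_offdiagonal star_invol M_preHilbert x (b_graded (2 * k).+1).
  by split=> //; split=> //; split.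
split; first by move=> x; rewrite /b /beta /= mulr1.
split; first by move=> x; case: (b_spec 2%N) => _ _; apply.
split; first by move=> x; rewrite /b /beta /= (ract1 M_preHilbert).
by [].
Qed.
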